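(* Let $N\ge2$, $\Lambda_0>0$, and let $\lambda:\mathbb R\to[0,\Lambda_0]$ be a nonincreasing measurable function. Let $c_1,c_2>0$ satisfy $c_1\Lambda_0\le1/2$ and $c_2\Lambda_0\le(N-1)/2$, and put $M=N-c_2\Lambda_0$. Then for all $s,t\in\mathbb R$, $$\int_{-\infty}^\infty\!\int_{-\infty}^\infty E(t,\tau,\sigma)\,\Sigma^+(s,\sigma)\,d\sigma\,d\tau\le c\,\Sigma^+(s,t),\qquad \int_{-\infty}^\infty\!\int_{-\infty}^\infty E(t,\tau,\sigma)\,\Sigma^-(\sigma,s)\,d\sigma\,d\tau\le c\,\Sigma^-(t,s),$$ where $c=2\big(\frac{3\Lambda_0}{M}+\frac1{c_1}+\frac1{c_2}\big)^2$.
   Context: For $m,n\ge0$, $Q^{m,n}(t)=t^m$ for $0<t\le1$ and $Q^{m,n}(t)=t^n$ for $t>1$. Define $E(\tau,\sigma)=\lambda(\tau)^2e^{N(\tau-\sigma)}$ if $\tau\le\sigma$ and $E(\tau,\sigma)=\lambda(\tau)\big(\lambda(\tau)e^{\sigma-\tau}+\lambda(\sigma)\big)$ if $\tau\ge\sigma$, and $E(t,\tau,\sigma)=Q^{N,0}(e^{t-\tau})\,E(\tau,\sigma)$. Define $\Sigma^{\pm}(s,\sigma)=\exp\big(\pm c_1\int_s^\sigma\lambda(\nu)\,d\nu\big)$ if $s\le\sigma$ and $\Sigma^{\pm}(s,\sigma)=\exp\big(\pm M(\sigma-s)\big)$ if $s\ge\sigma$. (In the paper $\lambda(\nu)=\Lambda(e^{-\nu})$,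 where $\Lambda$ is an increasing local Lipschitz modulus bounded by $\Lambda_0$.) *)

From Stdlib Require Import Reals Lra Classical ClassicalEpsilon.
Open Scope R_scope.

(* Total Riemann integral on [a,b] (oriented, as RiemannInt):
   the Riemann integral if f is Riemann integrable on [a,b], 0 otherwise. *)
Definition RInt (f : R -> R) (a b : R) : R :=
  match excluded_middle_informative (exists _ : Riemann_integrable f a b, True) with
  | left H => RiemannInt (proj1_sig (constructive_indefinite_description _ H))
  | right _ => 0
  end.

Definition Q (m n : nat) (t : R) : R := if Rle_dec t 1 then t ^ m else t ^ n.

Definition E2 (lam : R -> R) (N : nat) (tau sigma : R) : R :=
  if Rle_dec tau sigma then (lam tau)^2 * exp (INR N * (tau - sigma))
  else lam tau * (lam tau * exp (sigma - tau) + lam sigma).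

Definition E3 (lam : R -> R) (N : nat) (t tau sigma : R) : R :=
  Q N 0 (exp (t - tau)) * E2 lam N tau sigma.

(* Sigma^{+} (sgn = 1) and Sigma^{-} (sgn = -1) *)
Definition Sig (lam : R -> R) (c1 M sgn : R) (s sigma : R) : R :=
  if Rle_dec s sigma then exp (sgn * c1 * RInt lam s sigma)
  else exp (sgn * M * (sigma - s)).

(* Double improper integral over R^2 of a nonnegative function g(tau,sigma),
   bounded by C: every compact box iterated integral is <= C. *)
Definition dbl_int_le (g : R -> R -> R) (C : R) : Prop :=
  forall a b c d : R, a <= b -> c <= d ->
    RInt (fun tau => RInt (fun sigma => g tau sigma) c d) a b <= C.

(* Both weights are admissible: positive, with w(y)/w(x) between
   exp (c1 int_x^y lam) and exp (M (y - x)) for x <= y.  Indeed they are the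
   exponentials of the min, resp. max, of c1 int_s^sigma lam and M (sigma - s),
   and exponents with increments in that range form a lattice.
   For an admissible weight w two one-sided estimates hold: an integrand
   dominated by k e^(s - tau) w + k' lam w left of tau integrates to at most
   k w(tau) + k' w/c1, and one dominated by k e^(N (tau - s)) w right of tau
   integrates to at most k w(tau)/(N - M).  As w need not be differentiable,
   both are proved by comparing the integral on small cells with the increment
   of an explicit potential, the quadratic cell errors vanishing by bisection.
   Applying the estimates in sigma (splitting at tau) and then in tau
   (splitting at t) bounds the double integral by
   (L + 1/c1 + 1/c2)(1/c1 + 1/c2) w(t), which is below the paper's constant. *)
From Pilot Require Import Defs.
From Stdlib Require Import Reals Lra Lia Classical ClassicalEpsilon FunctionalExtensionality.
From Coquelicot Require Import Coquelicot.
Open Scope R_scope.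

Lemma cell_adapted (g : R -> R) (u v val : R) :
  u < v -> (forall x, u < x < v -> g x = val) ->
  adapted_couple g u v (cons u (cons v nil)) (cons val nil).
Proof.
  intros Huv Hg. unfold adapted_couple. repeat split.
  - intros i Hi. simpl in Hi. assert (i = 0%nat) by lia. subst. simpl. lra.
  - simpl. unfold Rmin. destruct (Rle_dec u v); lra.
  - simpl. unfold Rmax. destruct (Rle_dec u v); lra.
  - intros i Hi. simpl in Hi. assert (i = 0%nat) by lia. subst. simpl.
    intros x Hx. apply Hg. exact Hx.
Qed.

Definition cell_step_fun (g : R -> R) (u v val : R) (Huv : u < v)
  (Hg : forall x, u < x < v -> g x = val) : IsStepFun g u v :=
  existT _ (cons u (cons v nil)) (existT _ (cons val nil) (cell_adapted g u v val Huv Hg)).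

Lemma cell_step_fun_integral (g : R -> R) (u v val : R) (Huv : u < v)
  (Hg : forall x, u < x < v -> g x = val) :
  RiemannInt_SF (mkStepFun (cell_step_fun g u v val Huv Hg)) = val * (v - u).
Proof.
  unfold RiemannInt_SF. destruct (Rle_dec u v) as [_|Hn]; [|lra]. simpl. ring.
Qed.

Lemma grid_step_fun (g : R -> R) (a d : R) (val : nat -> R) :
  0 < d ->
  (forall k x, a + INR k * d < x < a + INR (S k) * d -> g x = val k) ->
  forall n, {pr : IsStepFun g a (a + INR (S n) * d) &
             RiemannInt_SF (mkStepFun pr) = d * sum_f_R0 val n}.
Proof.
  intros Hd Hg. induction n as [|n [pr Hpr]].
  - assert (Hcell : a < a + INR 1 * d) by (simpl; lra).
    assert (Hg0 : forall x, a < x < a + INR 1 * d -> g x = val 0%nat).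
    { intros x Hx. apply Hg. simpl in *. lra. }
    exists (cell_step_fun g _ _ (val 0%nat) Hcell Hg0).
    rewrite cell_step_fun_integral. simpl. ring.
  - assert (Hcell : a + INR (S n) * d < a + INR (S (S n)) * d)
      by (rewrite (S_INR (S n)); lra).
    assert (Ha : a <= a + INR (S n) * d) by (pose proof (pos_INR (S n)); nra).
    set (last := cell_step_fun g _ _ (val (S n)) Hcell (Hg (S n))).
    exists (StepFun_P41 Ha (Rlt_le _ _ Hcell) pr last).
    rewrite <- (StepFun_P43 pr last), Hpr.
    change (RiemannInt_SF {| fe := g; pre := last |})
      with (RiemannInt_SF (mkStepFun last)).
    unfold last. rewrite cell_step_fun_integral, tech5, (S_INR (S n)). ring.
Qed.

Definition grid_floor (a d x : R) : R := a + d * IZR (Int_part ((x - a) / d)).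

Lemma grid_floor_bounds a d x : 0 < d -> grid_floor a d x <= x < grid_floor a d x + d.
Proof.
  intros Hd. unfold grid_floor. destruct (base_Int_part ((x - a) / d)) as [H1 H2].
  set (z := IZR (Int_part ((x - a) / d))) in *.
  assert (d * ((x - a) / d) = x - a) by (field; lra).
  split; nra.
Qed.

Lemma grid_floor_on_cell a d x k : 0 < d -> a + INR k * d < x < a + INR (S k) * d ->
  grid_floor a d x = a + INR k * d.
Proof.
  intros Hd Hx. unfold grid_floor.
  assert (Hr : INR k < (x - a) / d < INR k + 1).
  { rewrite S_INR in Hx.
    split; apply (Rmult_lt_reg_r d); try lra;
      unfold Rdiv; rewrite Rmult_assoc, Rinv_l; lra. }
  assert (Hup : (Z.of_nat k + 1)%Z = up ((x - a) / d)).
  { apply tech_up; rewrite plus_IZR, <- INR_IZR_INZ; simpl; lra. }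
  unfold Int_part. rewrite <- Hup.
  replace (Z.of_nat k + 1 - 1)%Z with (Z.of_nat k) by lia.
  rewrite <- INR_IZR_INZ. ring.
Qed.

Lemma telescoping_sum (h : R -> R) (a d : R) n :
  sum_f_R0 (fun k => h (a + INR k * d) - h (a + INR (S k) * d)) n
  = h a - h (a + INR (S n) * d).
Proof.
  induction n as [|n IH].
  - simpl. replace (a + 0 * d) with a by ring. ring.
  - rewrite tech5, IH. ring.
Qed.

(* For nonincreasing f, the grid-floor function approximates f from above, with
   error bounded by the grid oscillation, whose integral telescopes to d (f a - f b). *)
Lemma nonincreasing_step_approx (f : R -> R) (a d : R) (n : nat) :
  (forall x y, x <= y -> f y <= f x) -> 0 < d ->
  {phi : StepFun a (a + INR (S n) * d) & {psi : StepFun a (a + INR (S n) * d) |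
    (forall t, Rabs (f t - phi t) <= psi t) /\
    RiemannInt_SF psi = d * (f a - f (a + INR (S n) * d))}}.
Proof.
  intros Hf Hd.
  destruct (grid_step_fun (fun x => f (grid_floor a d x)) a d
              (fun k => f (a + INR k * d)) Hd) with (n := n) as [prphi _].
  { intros k x Hx. cbv beta. rewrite (grid_floor_on_cell a d x k Hd Hx). reflexivity. }
  destruct (grid_step_fun (fun x => f (grid_floor a d x) - f (grid_floor a d x + d)) a d
              (fun k => f (a + INR k * d) - f (a + INR (S k) * d)) Hd) with (n := n)
    as [prpsi Hpsi].
  { intros k x Hx. cbv beta. rewrite (grid_floor_on_cell a d x k Hd Hx), S_INR.
    do 2 f_equal. ring. }
  exists (mkStepFun prphi), (mkStepFun prpsi). split.
  - intros t. simpl. destruct (grid_floor_bounds a d t Hd).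
    assert (f t <= f (grid_floor a d t)) by (apply Hf; lra).
    assert (f (grid_floor a d t + d) <= f t) by (apply Hf; lra).
    rewrite Rabs_left1; lra.
  - rewrite Hpsi, telescoping_sum. reflexivity.
Qed.

Lemma nonincreasing_Riemann_integrable (f : R -> R) (a b : R) :
  (forall x y, x <= y -> f y <= f x) -> a <= b -> Riemann_integrable f a b.
Proof.
  intros Hf Hab. destruct (Rle_lt_or_eq_dec a b Hab) as [Hlt|<-].
  2: apply RiemannInt_P7.
  intro eps. pose proof (cond_pos eps) as Heps.
  assert (Hosc : 0 <= f a - f b) by (pose proof (Hf a b Hab); lra).
  destruct (constructive_indefinite_description _
     (INR_unbounded ((b - a) * (f a - f b) / eps))) as [n Hn].
  assert (HSn : INR n < INR (S n)) by (apply lt_INR; lia).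
  pose proof (pos_INR n).
  set (d := (b - a) / INR (S n)).
  assert (Hd : 0 < d) by (unfold d; apply Rdiv_lt_0_compat; lra).
  assert (Hb : a + INR (S n) * d = b) by (unfold d; field; lra).
  assert (Hsmall : d * (f a - f b) < eps).
  { apply (Rmult_lt_reg_r (INR (S n))); [lra|].
    replace (d * (f a - f b) * INR (S n)) with ((b - a) * (f a - f b))
      by (unfold d; field; lra).
    assert ((b - a) * (f a - f b) / eps * eps = (b - a) * (f a - f b)) by (field; lra).
    assert ((b - a) * (f a - f b) / eps * eps < INR n * eps)
      by (apply Rmult_lt_compat_r; lra).
    nra. }
  rewrite <- Hb in Hsmall |- *.
  destruct (nonincreasing_step_approx f a d n Hf Hd) as [phi [psi [Happrox Hint]]].
  exists phi, psi. split.
  - intros t _. apply Happrox.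
  - rewrite Hint, Rabs_right by (rewrite Hb; nra). exact Hsmall.
Qed.

Lemma total_RInt_defined (f : R -> R) a b : ex_RInt f a b -> Defs.RInt f a b = RInt f a b.
Proof.
  intros H. unfold Defs.RInt.
  destruct (excluded_middle_informative _) as [H1|H1].
  - rewrite (RInt_Reals f a b (proj1_sig (constructive_indefinite_description _ H1))).
    reflexivity.
  - exfalso. apply H1. exists (ex_RInt_Reals_0 f a b H). exact I.
Qed.

Lemma total_RInt_undefined (f : R -> R) a b : ~ ex_RInt f a b -> Defs.RInt f a b = 0.
Proof.
  intros H. unfold Defs.RInt.
  destruct (excluded_middle_informative _) as [Hpr|_]; [|reflexivity].
  exfalso. destruct Hpr as [pr _]. apply H, ex_RInt_Reals_1, pr.
Qed.

Lemma ex_RInt_sub (f : R -> R) x y u v :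
  x <= u -> u <= v -> v <= y -> ex_RInt f x y -> ex_RInt f u v.
Proof.
  intros H1 H2 H3 H. apply (ex_RInt_Chasles_2 f x u v); [lra|].
  apply (ex_RInt_Chasles_1 f x v y); [lra|exact H].
Qed.

Lemma RInt_split (f : R -> R) u m v : ex_RInt f u m -> ex_RInt f m v ->
  RInt f u v = RInt f u m + RInt f m v.
Proof. intros H1 H2. rewrite <- (RInt_Chasles f u m v H1 H2). reflexivity. Qed.

(* Bounding a total integral over [a,b] by splitting at an arbitrary point p:
   only intervals lying on one side of p need to be controlled, and only when
   the integral exists (nonnegative bounds cover the non-integrable case). *)
Lemma total_RInt_split_bound (f : R -> R) (a b p B1 B2 : R) :
  a <= b -> 0 <= B1 -> 0 <= B2 ->
  (forall x y, x <= y -> y <= p -> ex_RInt f x y -> RInt f x y <= B1) ->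
  (forall x y, p <= x -> x <= y -> ex_RInt f x y -> RInt f x y <= B2) ->
  Defs.RInt f a b <= B1 + B2.
Proof.
  intros Hab HB1 HB2 Hleft Hright.
  destruct (classic (ex_RInt f a b)) as [Hex|Hnex].
  2: rewrite (total_RInt_undefined f a b Hnex); lra.
  rewrite (total_RInt_defined f a b Hex).
  destruct (Rle_dec p a) as [Hpa|Hap].
  { pose proof (Hright a b Hpa Hab Hex). lra. }
  destruct (Rle_dec b p) as [Hbp|Hpb].
  { pose proof (Hleft a b Hab Hbp Hex). lra. }
  assert (Hl : ex_RInt f a p) by (apply (ex_RInt_sub f a b); auto; lra).
  assert (Hr : ex_RInt f p b) by (apply (ex_RInt_sub f a b); auto; lra).
  rewrite (RInt_split f a p b Hl Hr).
  pose proof (Hleft a p ltac:(lra) ltac:(lra) Hl).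
  pose proof (Hright p b ltac:(lra) ltac:(lra) Hr). lra.
Qed.

Lemma RInt_affine (g : R -> R) (u v al be : R) : ex_RInt g u v ->
  ex_RInt (fun s => al + be * g s) u v /\
  RInt (fun s => al + be * g s) u v = al * (v - u) + be * RInt g u v.
Proof.
  intros Hg.
  assert (Hi : is_RInt (fun s => al + be * g s) u v (al * (v - u) + be * RInt g u v)).
  { apply (is_RInt_plus (fun _ => al) (fun s => be * g s)).
    - replace (al * (v - u)) with (scal (v - u) al)
        by (unfold scal; simpl; unfold mult; simpl; ring).
      apply (@is_RInt_const R_NormedModule).
    - apply (@is_RInt_scal R_NormedModule), (@RInt_correct R_CompleteNormedModule g u v Hg). }
  split; [exists (al * (v - u) + be * RInt g u v); exact Hi|].
  apply is_RInt_unique, Hi.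
Qed.

Lemma le_0_of_geometric_bound (z C : R) : (forall n, z <= C * (/ 2) ^ n) -> z <= 0.
Proof.
  intros Hz.
  assert (Hlim : is_lim_seq (fun n => C * (/ 2) ^ n) (Rbar_mult C 0)).
  { apply is_lim_seq_scal_l, is_lim_seq_geom. rewrite Rabs_pos_eq; lra. }
  rewrite Rbar_mult_0_r in Hlim.
  exact (is_lim_seq_le (fun _ => z) _ z 0 Hz (is_lim_seq_const z) Hlim).
Qed.

(* Bisection principle: an additive interval function I which, on every
   subinterval, is bounded by the increment of a potential Phi up to a quadratic
   error K (v-u)^2, is bounded by the increment of Phi exactly (the errors halve
   at each bisection). *)
Lemma additive_le_potential (I : R -> R -> R) (Phi : R -> R) (x y K : R) :
  x <= y ->
  (forall u m v, x <= u -> u <= m -> m <= v -> v <= y -> I u v = I u m + I m v) ->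
  (forall u v, x <= u -> u <= v -> v <= y -> I u v <= Phi v - Phi u + K * (v - u) ^ 2) ->
  I x y <= Phi y - Phi x.
Proof.
  intros Hxy Hadd Hloc.
  assert (Hbisect : forall n u v, x <= u -> u <= v -> v <= y ->
            I u v <= Phi v - Phi u + K * (v - u) ^ 2 * (/ 2) ^ n).
  { induction n as [|n IH]; intros u v Hu Huv Hv.
    - rewrite pow_O, Rmult_1_r. auto.
    - set (m := (u + v) / 2).
      rewrite (Hadd u m v) by (unfold m; lra).
      pose proof (IH u m Hu ltac:(unfold m; lra) ltac:(unfold m; lra)).
      pose proof (IH m v ltac:(unfold m; lra) ltac:(unfold m; lra) Hv).
      assert (K * (m - u) ^ 2 * (/ 2) ^ n + K * (v - m) ^ 2 * (/ 2) ^ n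
              = K * (v - u) ^ 2 * (/ 2) ^ S n) by (unfold m; simpl; field).
      lra. }
  apply Rminus_le, (le_0_of_geometric_bound _ (K * (y - x) ^ 2)).
  intros n. pose proof (Hbisect n x y ltac:(lra) Hxy ltac:(lra)). lra.
Qed.

Lemma RInt_le_potential (f Phi : R -> R) (x y K : R) :
  x <= y -> ex_RInt f x y ->
  (forall u v, x <= u -> u <= v -> v <= y ->
     exists g, ex_RInt g u v /\ (forall s, u < s < v -> f s <= g s) /\
               RInt g u v <= Phi v - Phi u + K * (v - u) ^ 2) ->
  RInt f x y <= Phi y - Phi x.
Proof.
  intros Hxy Hf Hloc. apply (additive_le_potential (RInt f) Phi x y K Hxy).
  - intros u m v H1 H2 H3 H4.
    apply RInt_split; apply (ex_RInt_sub f x y); auto; lra.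
  - intros u v H1 H2 H3. destruct (Hloc u v H1 H2 H3) as [g [Hg [Hfg Hbound]]].
    eapply Rle_trans; [|exact Hbound].
    apply RInt_le; auto. apply (ex_RInt_sub f x y); auto.
Qed.

Lemma exp_monotone x y : x <= y -> exp x <= exp y.
Proof.
  intros H. destruct (Rle_lt_or_eq_dec x y H) as [Hlt|<-]; [|lra].
  left. apply exp_increasing, Hlt.
Qed.

Lemma exp_sub_1_le z : exp z - 1 <= z * exp z.
Proof.
  pose proof (exp_ineq1_le (- z)). pose proof (exp_pos z).
  assert (exp (- z) * exp z = 1) by (rewrite <- exp_plus, Rplus_opp_l; apply exp_0).
  nra.
Qed.

Lemma mul_exp_neg_le z : z * exp (- z) <= 1 - exp (- z).
Proof.
  pose proof (exp_ineq1_le z). pose proof (exp_pos (- z)).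
  assert (exp (- z) * exp z = 1) by (rewrite <- exp_plus, Rplus_opp_l; apply exp_0).
  nra.
Qed.

Lemma Q_exp_bounds (N : nat) z : 0 <= Q N 0 (exp z) <= 1.
Proof.
  unfold Q. destruct (Rle_dec (exp z) 1).
  - pose proof (exp_pos z). split; [apply pow_le; lra|].
    rewrite <- (pow1 N). apply pow_incr. lra.
  - simpl. lra.
Qed.

Lemma Q_exp_pos (N : nat) z : 0 < z -> Q N 0 (exp z) = 1.
Proof.
  intros Hz. unfold Q. destruct (Rle_dec (exp z) 1) as [Hle|]; [|reflexivity].
  exfalso. pose proof (exp_increasing 0 z Hz). rewrite exp_0 in *. lra.
Qed.

Lemma Q_exp_nonpos (N : nat) z : z <= 0 -> Q N 0 (exp z) = exp (INR N * z).
Proof.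
  intros Hz. unfold Q. destruct (Rle_dec (exp z) 1) as [_|Hgt].
  - induction N as [|N IH]; simpl; [rewrite Rmult_0_l, exp_0; reflexivity|].
    rewrite IH, <- exp_plus. f_equal. destruct N; simpl; ring.
  - exfalso. apply Hgt. rewrite <- exp_0. apply exp_monotone, Hz.
Qed.

Section Estimates.

Variables (lam : R -> R) (L c1 M : R).
Hypothesis lam_range : forall x, 0 <= lam x <= L.
Hypothesis lam_noninc : forall x y, x <= y -> lam y <= lam x.
Hypothesis c1_pos : 0 < c1.
Hypothesis c1L_le_M : c1 * L <= M.

Lemma lam_integrable u v : ex_RInt lam u v.
Proof.
  destruct (Rle_dec u v) as [Huv|Hvu].
  - apply ex_RInt_Reals_1, nonincreasing_Riemann_integrable; auto.
  - apply ex_RInt_swap, ex_RInt_Reals_1, nonincreasing_Riemann_integrable; auto; lra.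
Qed.

Lemma lam_integral_bounds u v : u <= v -> 0 <= RInt lam u v <= L * (v - u).
Proof.
  intros Huv. split.
  - apply RInt_ge_0; auto using lam_integrable. intros s _. apply lam_range.
  - pose proof (RInt_le lam (fun _ => L) u v Huv (lam_integrable u v)
      (ex_RInt_const u v L) ltac:(intros; apply lam_range)) as H.
    rewrite RInt_const in H. unfold scal in H; simpl in H; unfold mult in H; simpl in H.
    lra.
Qed.

Lemma M_nonneg : 0 <= M.
Proof. pose proof (lam_range 0). nra. Qed.

Lemma c1_lam_integral_bounds x y : x <= y -> 0 <= c1 * RInt lam x y <= M * (y - x).
Proof.
  intros Hxy. destruct (lam_integral_bounds x y Hxy). split; [nra|].
  apply Rle_trans with (c1 * (L * (y - x))); [apply Rmult_le_compat_l; lra|nra].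
Qed.

(* Exponents of admissible weights: their increments over [x,y] lie between
   c1 * int_x^y lam and M (y - x). *)
Definition sandwiched (phi : R -> R) : Prop :=
  forall x y, x <= y -> c1 * RInt lam x y <= phi y - phi x <= M * (y - x).

Lemma sandwiched_primitive s : sandwiched (fun sigma => c1 * RInt lam s sigma).
Proof.
  intros x y Hxy.
  rewrite (RInt_split lam s x y (lam_integrable s x) (lam_integrable x y)).
  pose proof (c1_lam_integral_bounds x y Hxy). lra.
Qed.

Lemma sandwiched_linear s : sandwiched (fun sigma => M * (sigma - s)).
Proof. intros x y Hxy. pose proof (c1_lam_integral_bounds x y Hxy). split; nra. Qed.

Lemma sandwiched_min phi psi :
  sandwiched phi -> sandwiched psi -> sandwiched (fun s => Rmin (phi s) (psi s)).
Proof.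
  intros Hphi Hpsi x y Hxy. specialize (Hphi x y Hxy). specialize (Hpsi x y Hxy).
  unfold Rmin. destruct (Rle_dec (phi x) (psi x)), (Rle_dec (phi y) (psi y)); lra.
Qed.

Lemma sandwiched_max phi psi :
  sandwiched phi -> sandwiched psi -> sandwiched (fun s => Rmax (phi s) (psi s)).
Proof.
  intros Hphi Hpsi x y Hxy. specialize (Hphi x y Hxy). specialize (Hpsi x y Hxy).
  unfold Rmax. destruct (Rle_dec (phi x) (psi x)), (Rle_dec (phi y) (psi y)); lra.
Qed.

(* Admissible weights: positive, growing at least like exp (c1 int lam) and at
   most like exp (M t). These are the only properties of Sigma^+ and Sigma^-
   that the integral estimates use. *)
Definition admissible_weight (w : R -> R) : Prop :=
  (forall x, 0 < w x) /\
  (forall x y, x <= y -> w x * exp (c1 * RInt lam x y) <= w y) /\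
  (forall x y, x <= y -> w y <= w x * exp (M * (y - x))).

Lemma exp_sandwiched_admissible phi :
  sandwiched phi -> admissible_weight (fun s => exp (phi s)).
Proof.
  intros Hphi. split; [intros x; apply exp_pos|split]; intros x y Hxy;
    rewrite <- exp_plus; apply exp_monotone; pose proof (Hphi x y Hxy); lra.
Qed.

Lemma Sig_plus_min s sigma :
  Sig lam c1 M 1 s sigma = exp (Rmin (c1 * RInt lam s sigma) (M * (sigma - s))).
Proof.
  unfold Sig. destruct (Rle_dec s sigma) as [Hs|Hs].
  - rewrite (total_RInt_defined lam s sigma (lam_integrable s sigma)).
    pose proof (c1_lam_integral_bounds s sigma Hs).
    rewrite Rmin_left by lra. f_equal. ring.
  - rewrite <- (opp_RInt_swap lam sigma s (lam_integrable sigma s)).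
    pose proof (c1_lam_integral_bounds sigma s ltac:(lra)).
    unfold opp; simpl. rewrite Rmin_right by lra. f_equal. ring.
Qed.

Lemma Sig_minus_max s sigma :
  Sig lam c1 M (-1) sigma s = exp (Rmax (c1 * RInt lam s sigma) (M * (sigma - s))).
Proof.
  unfold Sig. destruct (Rle_dec sigma s) as [Hs|Hs].
  - rewrite (total_RInt_defined lam sigma s (lam_integrable sigma s)).
    rewrite <- (opp_RInt_swap lam sigma s (lam_integrable sigma s)).
    pose proof (c1_lam_integral_bounds sigma s Hs).
    unfold opp; simpl. rewrite Rmax_left by lra. f_equal. ring.
  - pose proof (c1_lam_integral_bounds s sigma ltac:(lra)).
    rewrite Rmax_right by lra. f_equal. ring.
Qed.

Lemma Sig_plus_admissible s : admissible_weight (fun sigma => Sig lam c1 M 1 s sigma).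
Proof.
  rewrite (functional_extensionality _ _ (Sig_plus_min s)).
  apply exp_sandwiched_admissible, sandwiched_min;
    [apply sandwiched_primitive|apply sandwiched_linear].
Qed.

Lemma Sig_minus_admissible s : admissible_weight (fun sigma => Sig lam c1 M (-1) sigma s).
Proof.
  rewrite (functional_extensionality _ _ (fun sigma => Sig_minus_max s sigma)).
  apply exp_sandwiched_admissible, sandwiched_max;
    [apply sandwiched_primitive|apply sandwiched_linear].
Qed.


Variable w : R -> R.
Hypothesis w_adm : admissible_weight w.

Lemma weight_pos x : 0 < w x.
Proof. apply w_adm. Qed.

Lemma weight_increment_lower u v : u <= v -> c1 * w u * RInt lam u v <= w v - w u.
Proof.
  intros Huv. destruct w_adm as [_ [Hlow _]].
  pose proof (Hlow u v Huv). pose proof (exp_ineq1_le (c1 * RInt lam u v)).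
  pose proof (weight_pos u). nra.
Qed.

Lemma weight_nondecreasing x y : x <= y -> w x <= w y.
Proof.
  intros Hxy. pose proof (weight_increment_lower x y Hxy).
  pose proof (lam_integral_bounds x y Hxy). pose proof (weight_pos x).
  assert (0 <= c1 * w x * RInt lam x y) by (apply Rmult_le_pos; nra). lra.
Qed.

Lemma weight_increment_upper x y u v : x <= u -> u <= v -> v <= y ->
  w v - w u <= w y * M * exp (M * (y - x)) * (v - u).
Proof.
  intros Hxu Huv Hvy. destruct w_adm as [_ [_ Hup]].
  pose proof M_nonneg as HM. set (h := v - u).
  assert (Hh : 0 <= M * h) by (unfold h; nra).
  pose proof (Hup u v Huv) as Hgrowth. fold h in Hgrowth.
  pose proof (exp_sub_1_le (M * h)).
  assert (Hexp : exp (M * h) <= exp (M * (y - x))) by (apply exp_monotone; unfold h; nra).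
  pose proof (weight_nondecreasing u y ltac:(lra)). pose proof (weight_pos u).
  assert (w u * (exp (M * h) - 1) <= w y * (M * h * exp (M * (y - x)))).
  { apply Rmult_le_compat; try lra.
    - pose proof (exp_ineq1_le (M * h)). lra.
    - apply Rle_trans with (M * h * exp (M * h)); [lra|].
      apply Rmult_le_compat_l; lra. }
  nra.
Qed.

Lemma weight_discounted Nr u v : u <= v ->
  exp (- (Nr * (v - u))) * w v <= exp (- ((Nr - M) * (v - u))) * w u.
Proof.
  intros Huv. destruct w_adm as [_ [_ Hup]].
  replace (exp (- ((Nr - M) * (v - u))))
    with (exp (- (Nr * (v - u))) * exp (M * (v - u)))
    by (rewrite <- exp_plus; f_equal; ring).
  rewrite Rmult_assoc. apply Rmult_le_compat_l; [left; apply exp_pos|].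
  rewrite Rmult_comm. apply Hup, Huv.
Qed.

(* Local (one-cell) estimates: the integral over a cell [u,v] of the integrand
   with its slowly varying factors frozen at an endpoint is at most the
   increment of a potential plus an error quadratic in v - u.  The three
   lemmas treat the factors e^(s - tau) w(s), lam(s) w(s) (potential w/c1) and
   e^(Nr (tau - s)) w(s) (potential - e^(Nr (tau - s)) w(s)/(Nr - M)). *)
Lemma exp_weight_increment y tau u v : u <= v -> v <= y -> y <= tau ->
  exp (v - tau) * w v * (v - u)
  <= exp (v - tau) * w v - exp (u - tau) * w u + w y * (v - u) ^ 2.
Proof.
  intros Huv Hvy Hyt. set (h := v - u). set (P := exp (u - tau)).
  assert (Hv : exp (v - tau) = P * exp h) by (unfold P, h; rewrite <- exp_plus; f_equal; ring).
  assert (HPh : P * exp h <= 1) by (rewrite <- Hv, <- exp_0; apply exp_monotone; lra).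
  assert (HP : 0 < P) by apply exp_pos.
  assert (Hh : 0 <= h) by (unfold h; lra).
  pose proof (weight_pos u). pose proof (exp_pos h).
  pose proof (weight_nondecreasing u v Huv). pose proof (weight_nondecreasing v y Hvy).
  assert (HPw : 0 < P * w v) by (apply Rmult_lt_0_compat; lra).
  rewrite Hv.
  assert (Hlin : P * w v * h <= P * w v * (exp h - 1)).
  { apply Rmult_le_compat_l; [lra|]. pose proof (exp_ineq1_le h). lra. }
  assert (Hquad : P * w v * h * (exp h - 1) <= P * w v * h * (h * exp h)).
  { apply Rmult_le_compat_l; [nra|apply exp_sub_1_le]. }
  assert (Hdecay : (P * exp h) * w v * h ^ 2 <= 1 * w y * h ^ 2).
  { apply Rmult_le_compat_r; [nra|]. apply Rmult_le_compat; nra. }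
  assert (P * w u <= P * w v) by (apply Rmult_le_compat_l; lra).
  nra.
Qed.

Lemma lam_weight_increment x y u v : x <= u -> u <= v -> v <= y ->
  w v * RInt lam u v
  <= w v / c1 - w u / c1 + w y * M * exp (M * (y - x)) * L * (v - u) ^ 2.
Proof.
  intros Hxu Huv Hvy.
  pose proof (weight_increment_lower u v Huv).
  pose proof (weight_increment_upper x y u v Hxu Huv Hvy).
  pose proof (weight_nondecreasing u v Huv).
  destruct (lam_integral_bounds u v Huv).
  assert (w u * RInt lam u v <= w v / c1 - w u / c1).
  { apply (Rmult_le_reg_l c1); [lra|]. field_simplify; lra. }
  assert ((w v - w u) * RInt lam u v
          <= (w y * M * exp (M * (y - x)) * (v - u)) * (L * (v - u)))
    by (apply Rmult_le_compat; lra).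
  nra.
Qed.

Lemma decay_weight_increment Nr x y tau u v :
  M < Nr -> tau <= u -> x <= u -> u <= v -> v <= y ->
  exp (Nr * (tau - u)) * w v * (v - u)
  <= (exp (Nr * (tau - u)) * w u - exp (Nr * (tau - v)) * w v) / (Nr - M)
     + (w y * M * exp (M * (y - x)) + w y * (Nr - M)) * (v - u) ^ 2.
Proof.
  intros HMN Htu Hxu Huv Hvy.
  set (D := Nr - M). set (h := v - u). set (E := exp (Nr * (tau - u))).
  set (F := exp (- (D * h))). set (Lip := w y * M * exp (M * (y - x))).
  assert (HD : 0 < D) by (unfold D; lra).
  assert (Hh : 0 <= h) by (unfold h; lra).
  pose proof M_nonneg.
  assert (HE : 0 < E) by apply exp_pos.
  assert (HE1 : E <= 1) by (unfold E; rewrite <- exp_0; apply exp_monotone; nra).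
  assert (Hv : exp (Nr * (tau - v)) = E * exp (- (Nr * h)))
    by (unfold E, h; rewrite <- exp_plus; f_equal; ring).
  pose proof (weight_discounted Nr u v Huv) as Hdisc. fold D h F in Hdisc.
  pose proof (mul_exp_neg_le (D * h)) as HF1. fold F in HF1.
  pose proof (exp_ineq1_le (- (D * h))) as HF2. fold F in HF2.
  pose proof (weight_increment_upper x y u v Hxu Huv Hvy) as Hlip. fold Lip h in Hlip.
  pose proof (weight_pos u). assert (HF : 0 < F) by apply exp_pos.
  assert (HDhF : 0 <= D * h * F) by (apply Rmult_le_pos; [apply Rmult_le_pos|]; lra).
  pose proof (weight_nondecreasing u v Huv). pose proof (weight_nondecreasing v y Hvy).
  rewrite Hv.
  (* The potential increment is at least E w(u) h e^(-D h), ... *)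
  assert (Hinc : E * w u * h * F
                 <= (E * w u - E * exp (- (Nr * h)) * w v) / D).
  { apply (Rmult_le_reg_r D); [lra|].
    replace ((E * w u - E * exp (- (Nr * h)) * w v) / D * D)
      with (E * (w u - exp (- (Nr * h)) * w v)) by (field; lra).
    assert (w u * (D * h * F) <= w u * (1 - F)) by (apply Rmult_le_compat_l; lra).
    apply Rle_trans with (E * (w u * (1 - F))); [nra|].
    apply Rmult_le_compat_l; lra. }
  (* ... and the frozen integral exceeds this by O(h^2). *)
  assert (Hrem : E * h * ((w v - w u) + w u * (1 - F)) <= 1 * h * (Lip * h + w y * (D * h))).
  { assert (w u * (1 - F) <= w y * (D * h)) by (apply Rmult_le_compat; lra).
    assert (0 <= w u * (1 - F)) by (apply Rmult_le_pos; lra).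
    apply Rmult_le_compat; [nra|lra|apply Rmult_le_compat_r; lra|lra]. }
  fold E. nra.
Qed.

Lemma left_integral_bound (f : R -> R) (x y tau k k' : R) :
  0 <= k -> 0 <= k' -> x <= y -> y <= tau -> ex_RInt f x y ->
  (forall s, x < s < y -> f s <= k * exp (s - tau) * w s + k' * lam s * w s) ->
  RInt f x y <= k * w tau + k' * w y / c1.
Proof.
  intros Hk Hk' Hxy Hyt Hf Hdom.
  eapply Rle_trans.
  - apply (RInt_le_potential f (fun s => k * (exp (s - tau) * w s) + k' * (w s / c1))
             x y (k * w y + k' * (w y * M * exp (M * (y - x)) * L)) Hxy Hf).
    intros u v Hxu Huv Hvy.
    destruct (RInt_affine lam u v (k * exp (v - tau) * w v) (k' * w v) (lam_integrable u v))
      as [Hex Hint].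
    exists (fun s => k * exp (v - tau) * w v + k' * w v * lam s).
    split; [exact Hex|split].
    + intros s Hs. eapply Rle_trans; [apply Hdom; lra|].
      pose proof (lam_range s). pose proof (weight_pos s).
      pose proof (weight_nondecreasing s v ltac:(lra)).
      assert (exp (s - tau) * w s <= exp (v - tau) * w v)
        by (apply Rmult_le_compat; [left; apply exp_pos|lra|apply exp_monotone; lra|lra]).
      assert (k * (exp (s - tau) * w s) <= k * (exp (v - tau) * w v))
        by (apply Rmult_le_compat_l; lra).
      assert (k' * (lam s * w s) <= k' * (lam s * w v))
        by (apply Rmult_le_compat_l; [lra|apply Rmult_le_compat_l; lra]).
      lra.
    + rewrite Hint.
      pose proof (Rmult_le_compat_l k _ _ Hk
                    (exp_weight_increment y tau u v Huv Hvy Hyt)).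
      pose proof (Rmult_le_compat_l k' _ _ Hk'
                    (lam_weight_increment x y u v Hxu Huv Hvy)).
      lra.
  - pose proof (weight_nondecreasing y tau Hyt). pose proof (weight_pos x).
    pose proof (weight_pos y).
    assert (Hend : exp (y - tau) * w y <= 1 * w tau).
    { apply Rmult_le_compat; [left; apply exp_pos|lra| |lra].
      rewrite <- exp_0. apply exp_monotone. lra. }
    assert (0 <= exp (x - tau) * w x) by (pose proof (exp_pos (x - tau)); nra).
    assert (0 <= w x / c1) by (apply Rdiv_le_0_compat; lra).
    pose proof (Rmult_le_compat_l k _ _ Hk Hend).
    assert (0 <= k * (exp (x - tau) * w x)) by (apply Rmult_le_pos; lra).
    assert (0 <= k' * (w x / c1)) by (apply Rmult_le_pos; lra).
    lra.
Qed.

Lemma right_integral_bound (f : R -> R) (x y tau k Nr : R) :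
  0 <= k -> M < Nr -> tau <= x -> x <= y -> ex_RInt f x y ->
  (forall s, x < s < y -> f s <= k * exp (Nr * (tau - s)) * w s) ->
  RInt f x y <= k * w tau / (Nr - M).
Proof.
  intros Hk HMN Htx Hxy Hf Hdom.
  set (D := Nr - M). assert (HD : 0 < D) by (unfold D; lra).
  pose proof M_nonneg.
  eapply Rle_trans.
  - apply (RInt_le_potential f (fun s => - (k * (exp (Nr * (tau - s)) * w s)) / D)
             x y (k * (w y * M * exp (M * (y - x)) + w y * D)) Hxy Hf).
    intros u v Hxu Huv Hvy.
    exists (fun _ => k * exp (Nr * (tau - u)) * w v).
    split; [apply ex_RInt_const|split].
    + intros s Hs. eapply Rle_trans; [apply Hdom; lra|].
      pose proof (weight_pos s). pose proof (weight_nondecreasing s v ltac:(lra)).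
      rewrite !Rmult_assoc. apply Rmult_le_compat_l; [lra|].
      apply Rmult_le_compat; [left; apply exp_pos|lra| |lra].
      apply exp_monotone. nra.
    + rewrite RInt_const. unfold scal; simpl; unfold mult; simpl.
      pose proof (decay_weight_increment Nr x y tau u v HMN ltac:(lra) Hxu Huv Hvy) as Hcell.
      pose proof (Rmult_le_compat_l k _ _ Hk Hcell) as Hloc.
      fold D in Hloc.
      assert (Hdiv : forall a b, k * ((a - b) / D) = - (k * b) / D - - (k * a) / D)
        by (intros; field; lra).
      rewrite Rmult_plus_distr_l, Hdiv in Hloc. lra.
  - pose proof (weight_discounted Nr tau x Htx) as Hdisc. fold D in Hdisc.
    assert (exp (- (D * (x - tau))) <= 1)
      by (rewrite <- exp_0; apply exp_monotone; nra).
    pose proof (weight_pos tau). pose proof (weight_pos y).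
    replace (exp (- (Nr * (x - tau)))) with (exp (Nr * (tau - x))) in Hdisc
      by (f_equal; ring).
    assert (Hstart : exp (Nr * (tau - x)) * w x <= w tau) by nra.
    assert (0 <= k * (exp (Nr * (tau - y)) * w y))
      by (pose proof (exp_pos (Nr * (tau - y))); apply Rmult_le_pos; nra).
    pose proof (Rmult_le_compat_l k _ _ Hk Hstart).
    unfold Rdiv. pose proof (Rinv_0_lt_compat D HD). nra.
Qed.

Variables (N : nat) (c2 : R).
Hypothesis c2_pos : 0 < c2.
Hypothesis L_pos : 0 < L.
Hypothesis M_eq : M = INR N - c2 * L.

Lemma E3_before t tau sigma : sigma < tau ->
  E3 lam N t tau sigma
  = Q N 0 (exp (t - tau)) * lam tau ^ 2 * exp (sigma - tau)
    + Q N 0 (exp (t - tau)) * lam tau * lam sigma.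
Proof.
  intros H. unfold E3, E2. destruct (Rle_dec tau sigma); [lra|ring].
Qed.

Lemma E3_after t tau sigma : tau <= sigma ->
  E3 lam N t tau sigma = Q N 0 (exp (t - tau)) * lam tau ^ 2 * exp (INR N * (tau - sigma)).
Proof.
  intros H. unfold E3, E2. destruct (Rle_dec tau sigma); [ring|lra].
Qed.

Lemma M_lt_N : M < INR N.
Proof. rewrite M_eq. pose proof (Rmult_lt_0_compat c2 L c2_pos L_pos). lra. Qed.

Lemma inner_integral_bound t tau c d : c <= d ->
  Defs.RInt (fun sigma => E3 lam N t tau sigma * w sigma) c d
  <= Q N 0 (exp (t - tau)) * lam tau * w tau * (L + 1 / c1 + 1 / c2).
Proof.
  intros Hcd. set (q := Q N 0 (exp (t - tau))).
  pose proof (Q_exp_bounds N (t - tau)) as Hq. fold q in Hq.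
  pose proof (lam_range tau). pose proof (weight_pos tau).
  assert (Hqlw : 0 <= q * lam tau * w tau) by (apply Rmult_le_pos; [apply Rmult_le_pos|]; lra).
  pose proof (Rinv_0_lt_compat c1 c1_pos). pose proof (Rinv_0_lt_compat c2 c2_pos).
  replace (q * lam tau * w tau * (L + 1 / c1 + 1 / c2))
    with (q * lam tau * w tau * (L + 1 / c1) + q * lam tau * w tau * / c2) by (field; lra).
  apply (total_RInt_split_bound _ c d tau); auto; try (apply Rmult_le_pos; unfold Rdiv; lra).
  - intros x y Hxy Hyt Hex. eapply Rle_trans.
    + apply (left_integral_bound _ x y tau (q * lam tau ^ 2) (q * lam tau)); auto;
        try (apply Rmult_le_pos; [lra|]; try apply pow_le; lra).
      intros s Hs. rewrite E3_before by lra. fold q. right. ring.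
    + pose proof (weight_nondecreasing y tau Hyt). pose proof (weight_pos y).
      assert (q * lam tau * w tau * lam tau <= q * lam tau * w tau * L)
        by (apply Rmult_le_compat_l; lra).
      assert (q * lam tau * w y * / c1 <= q * lam tau * w tau * / c1)
        by (apply Rmult_le_compat_r; [lra|apply Rmult_le_compat_l; nra]).
      unfold Rdiv. nra.
  - intros x y Htx Hxy Hex. eapply Rle_trans.
    + apply (right_integral_bound _ x y tau (q * lam tau ^ 2) (INR N)); auto using M_lt_N.
      * apply Rmult_le_pos; [lra|apply pow_le; lra].
      * intros s Hs. rewrite E3_after by lra. fold q. right. ring.
    + replace (INR N - M) with (c2 * L) by (rewrite M_eq; ring).
      apply (Rmult_le_reg_r (c2 * L)); [apply Rmult_lt_0_compat; lra|].
      replace (q * lam tau ^ 2 * w tau / (c2 * L) * (c2 * L))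
        with (q * lam tau * w tau * lam tau) by (field; lra).
      replace (q * lam tau * w tau * / c2 * (c2 * L))
        with (q * lam tau * w tau * L) by (field; lra).
      apply Rmult_le_compat_l; lra.
Qed.

Lemma outer_integral_bound t a b c d : a <= b -> c <= d ->
  Defs.RInt (fun tau => Defs.RInt (fun sigma => E3 lam N t tau sigma * w sigma) c d) a b
  <= (L + 1 / c1 + 1 / c2) * (1 / c1 + 1 / c2) * w t.
Proof.
  intros Hab Hcd. set (A := L + 1 / c1 + 1 / c2).
  pose proof (Rinv_0_lt_compat c1 c1_pos). pose proof (Rinv_0_lt_compat c2 c2_pos).
  assert (HA : 0 < A) by (unfold A, Rdiv; lra).
  pose proof (weight_pos t).
  assert (Hinner : forall tau,
    Defs.RInt (fun sigma => E3 lam N t tau sigma * w sigma) c d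
    <= Q N 0 (exp (t - tau)) * lam tau * w tau * A)
    by (intros; apply inner_integral_bound, Hcd).
  replace (A * (1 / c1 + 1 / c2) * w t) with (A * w t / c1 + A * w t / c2) by (field; lra).
  apply (total_RInt_split_bound _ a b t); auto;
    try (unfold Rdiv; apply Rmult_le_pos; [apply Rmult_le_pos|]; lra).
  - intros x y Hxy Hyt Hex. eapply Rle_trans.
    + apply (left_integral_bound _ x y y 0 A); auto; try lra.
      intros s Hs. eapply Rle_trans; [apply Hinner|].
      rewrite Q_exp_pos by lra. right. ring.
    + pose proof (weight_nondecreasing y t Hyt).
      rewrite Rmult_0_l, Rplus_0_l. unfold Rdiv.
      apply Rmult_le_compat_r; [lra|apply Rmult_le_compat_l; lra].
  - intros x y Htx Hxy Hex. eapply Rle_trans.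
    + apply (right_integral_bound _ x y t (A * L) (INR N)); auto using M_lt_N; try nra.
      intros s Hs. eapply Rle_trans; [apply Hinner|].
      rewrite Q_exp_nonpos by lra.
      pose proof (lam_range s). pose proof (weight_pos s).
      pose proof (exp_pos (INR N * (t - s))).
      assert (exp (INR N * (t - s)) * w s * A * lam s <= exp (INR N * (t - s)) * w s * A * L)
        by (apply Rmult_le_compat_l; [apply Rmult_le_pos; [apply Rmult_le_pos|]|]; lra).
      nra.
    + replace (INR N - M) with (c2 * L) by (rewrite M_eq; ring).
      right. field. lra.
Qed.

Lemma double_integral_bound t :
  dbl_int_le (fun tau sigma => E3 lam N t tau sigma * w sigma)
    ((L + 1 / c1 + 1 / c2) * (1 / c1 + 1 / c2) * w t).
Proof. intros a b c d Hab Hcd. apply outer_integral_bound; assumption. Qed.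

End Estimates.

Lemma dbl_int_le_scale (g : R -> R -> R) (C C' W : R) :
  0 <= W -> C <= C' -> dbl_int_le g (C * W) -> dbl_int_le g (C' * W).
Proof.
  intros HW HC Hg a b c d Hab Hcd.
  eapply Rle_trans; [apply Hg; assumption|]. apply Rmult_le_compat_r; assumption.
Qed.

(* The constant of the paper dominates the one produced by the estimates,
   using L <= 1/(2 c1). *)
Lemma constant_le (L c1 c2 M : R) :
  0 < L -> 0 < c1 -> 0 < c2 -> 0 < M -> c1 * L <= 1 / 2 ->
  (L + 1 / c1 + 1 / c2) * (1 / c1 + 1 / c2) <= 2 * (3 * L / M + 1 / c1 + 1 / c2) ^ 2.
Proof.
  intros HL Hc1 Hc2 HM Hc1L.
  pose proof (Rinv_0_lt_compat c1 Hc1). pose proof (Rinv_0_lt_compat c2 Hc2).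
  assert (0 <= 3 * L / M) by (unfold Rdiv; apply Rmult_le_pos; [lra|];
                               left; apply Rinv_0_lt_compat, HM).
  assert (L <= / c1 / 2).
  { apply (Rmult_le_reg_l c1); [lra|].
    replace (c1 * (/ c1 / 2)) with (/ 2) by (field; lra). lra. }
  unfold Rdiv in *. rewrite !Rmult_1_l in *. nra.
Qed.

Theorem lemma3p6 (N : nat) (Lambda0 c1 c2 : R) (lam : R -> R) :
  (2 <= N)%nat -> 0 < Lambda0 ->
  (forall x, 0 <= lam x <= Lambda0) ->
  (forall x y, x <= y -> lam y <= lam x) ->
  0 < c1 -> 0 < c2 ->
  c1 * Lambda0 <= 1/2 -> c2 * Lambda0 <= (INR N - 1) / 2 ->
  let M := INR N - c2 * Lambda0 in
  let c := 2 * (3 * Lambda0 / M + 1 / c1 + 1 / c2) ^ 2 in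
  forall s t : R,
    dbl_int_le (fun tau sigma => E3 lam N t tau sigma * Sig lam c1 M 1 s sigma)
      (c * Sig lam c1 M 1 s t) /\
    dbl_int_le (fun tau sigma => E3 lam N t tau sigma * Sig lam c1 M (-1) sigma s)
      (c * Sig lam c1 M (-1) t s).
Proof.
  intros HN HL Hrange Hnoninc Hc1 Hc2 Hc1L Hc2L M c s t.
  assert (HNr : 2 <= INR N) by (apply (le_INR 2) in HN; simpl in HN; lra).
  assert (HM : c1 * Lambda0 <= M) by (unfold M; lra).
  assert (Hc : (Lambda0 + 1 / c1 + 1 / c2) * (1 / c1 + 1 / c2) <= c)
    by (apply constant_le; unfold M; lra).
  pose proof (Sig_plus_admissible lam Lambda0 c1 M Hrange Hnoninc Hc1 HM s) as Hplus.
  pose proof (Sig_minus_admissible lam Lambda0 c1 M Hrange Hnoninc Hc1 HM s) as Hminus.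
  split.
  - apply (dbl_int_le_scale _ _ _ _ (Rlt_le _ _ (proj1 Hplus t)) Hc).
    exact (double_integral_bound lam Lambda0 c1 M Hrange Hnoninc Hc1 HM _ Hplus
             N c2 Hc2 HL eq_refl t).
  - apply (dbl_int_le_scale _ _ _ _ (Rlt_le _ _ (proj1 Hminus t)) Hc).
    exact (double_integral_bound lam Lambda0 c1 M Hrange Hnoninc Hc1 HM _ Hminus
             N c2 Hc2 HL eq_refl t).
Qed.
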